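(* Let $\epsilon,\delta\in(0,1)$, let $P\subset\mathbb{R}^d$ with $|P|=n$ be held by a data source, and let $k$ be the number of centers. Consider the following algorithm. The data source computes $\mathbf{S}=(S,\Delta,w)=\pi_2(P)$ using the FSS coreset construction $\pi_2$, then computes $S'=\pi_1(S)$ where $\pi_1:\mathbb{R}^d\to\mathbb{R}^{d'}$ is a JL projection (applied as multiplication by a $d\times d'$ matrix) with $d'=O(\epsilon^{-2}\log(|S|k/\delta))$, and reports $(S',\Delta,w)$ to a server. The server computes $X'$, the optimal $k$-means centers of $S'$ with weights $w$, and returns a set $X\subset\mathbb{R}^d$ with $\pi_1(X)=X'$. Let $X^*$ be optimal $k$-means centers of $P$. Suppose that $\pi_2$ outputs an $\epsilon$-coreset of $P$ with probability at least $1-\delta$, and that with probability at least $1-\delta$, $\mathrm{cost}(\mathbf{S},Y)\approx_{(1+\epsilon)^2}\mathrm{cost}((\pi_1(S),\Delta,w),\pi_1(Y))$ for both $Y=X$ and $Y=X^*$. Assume $\min(n,d)\gg k,1/\epsilon,1/\delta$. Then: (1) $X$ is a $\frac{(1+\epsilon)^5}{1-\epsilon}$-approximation for $k$-means clustering of $P$ with probability at least $(1-\delta)^2$; (2) the communication cost is $\tilde{O}(k^3/\epsilon^6)$; (3) the complexity at the data source is $O(nd\cdot\min(n,d))$.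
   Context: For finite $P,X\subset\mathbb{R}^d$, $\mathrm{cost}(P,X)=\sum_{p\in P}\min_{x\in X}\|p-x\|^2$. A coreset is a triple $\mathbf{S}=(S,\Delta,w)$ with $S$ finite, $w:S\to\mathbb{R}$, $\Delta\in\mathbb{R}$, and $\mathrm{cost}(\mathbf{S},X)=\sum_{q\in S}w(q)\min_{x\in X}\|q-x\|^2+\Delta$; it is an $\epsilon$-coreset of $P$ if $(1-\epsilon)\mathrm{cost}(P,X)\le\mathrm{cost}(\mathbf{S},X)\le(1+\epsilon)\mathrm{cost}(P,X)$ for all $k$-point sets $X$. Optimal $k$-means centers of $S'$ with weights $w$ minimize $\sum_{q\in S'}w(q)\min_{x\in X'}\|q-x\|^2$. For scalars, $x\approx_c y$ means $\frac1c x\le y\le cx$. $X$ is an $\alpha$-approximation for $k$-means of $P$ if $\mathrm{cost}(P,X)\le\alpha\,\mathrm{cost}(P,X^* )$ with $X^*$ optimal. A JL projection is a random linear map $\pi:\mathbb{R}^d\to\mathbb{R}^{d'}$ from a family such that for every $\epsilon,\delta\in(0,1/2)$ there is $d'=O(\epsilon^{-2}\log(1/\delta))$ with $\Pr\{\|\pi(x)\|\approx_{1+\epsilon}\|x\|\}\ge1-\delta$ for every $x$, and which is sub-Gaussian-tailed. FSS (Feldman–Schmidt–Sohler) applied to $P$: it projects onto the span of the top $O(k/\epsilon^2)$ right singular vectors of the data matrix and applies sensitivity sampling; its output has $|S|=O(k^3\log^2k\,\epsilon^{-4}\log(1/\delta))$, is an $\epsilon$-coreset with probability $\ge1-\delta$,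 and is computed in time $O(\min(nd^2,n^2d)+nk\epsilon^{-2}(d+k\log(1/\delta)))$. Communication cost is the number of scalars the data source sends; complexity is the number of elementary operations at the data source; $\tilde{O}$ hides polylogarithmic factors. *)

From HB Require Import structures.
From mathcomp Require Import all_boot all_order all_algebra.
From mathcomp Require Import all_classical all_reals all_analysis.
Set Implicit Arguments. Unset Strict Implicit. Unset Printing Implicit Defensive.
Import Order.TTheory GRing.Theory Num.Theory.
Local Open Scope ring_scope.

Section KMeans.
Variable R : realType.

Definition sqdist (d : nat) (u v : 'rV[R]_d) : R :=
  \sum_(i < d) (u ord0 i - v ord0 i) ^+ 2.

(* min_{x in X} ||p - x||^2  (X is always nonempty where used) *)
Definition dist2set (d : nat) (p : 'rV[R]_d) (X : seq 'rV[R]_d) : R :=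
  \big[Num.min/sqdist p (head p X)]_(x <- X) sqdist p x.

Definition cost (d : nat) (P X : seq 'rV[R]_d) : R :=
  \sum_(p <- P) dist2set p X.

Definition wcost (d : nat) (S : seq 'rV[R]_d) (w : 'rV[R]_d -> R)
    (X : seq 'rV[R]_d) : R :=
  \sum_(q <- S) w q * dist2set q X.

Definition coreset_cost (d : nat) (S : seq 'rV[R]_d) (Delta : R)
    (w : 'rV[R]_d -> R) (X : seq 'rV[R]_d) : R :=
  wcost S w X + Delta.

Definition jl_apply (d d' : nat) (Pi : 'M[R]_(d, d')) (v : 'rV[R]_d) : 'rV[R]_d' :=
  v *m Pi.

Definition proj_wcost (d d' : nat) (Pi : 'M[R]_(d, d')) (S : seq 'rV[R]_d)
    (w : 'rV[R]_d -> R) (X' : seq 'rV[R]_d') : R :=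
  \sum_(q <- S) w q * dist2set (jl_apply Pi q) X'.

Definition proj_coreset_cost (d d' : nat) (Pi : 'M[R]_(d, d'))
    (S : seq 'rV[R]_d) (Delta : R) (w : 'rV[R]_d -> R) (Y : seq 'rV[R]_d) : R :=
  proj_wcost Pi S w (map (jl_apply Pi) Y) + Delta.

Definition is_coreset (d k : nat) (eps : R) (P S : seq 'rV[R]_d) (Delta : R)
    (w : 'rV[R]_d -> R) : Prop :=
  forall X : seq 'rV[R]_d, size X = k ->
    (1 - eps) * cost P X <= coreset_cost S Delta w X /\
    coreset_cost S Delta w X <= (1 + eps) * cost P X.

Definition approx_c (c x y : R) : Prop := x / c <= y /\ y <= c * x.

Definition optimal_kmeans (d k : nat) (P Xs : seq 'rV[R]_d) : Prop :=
  size Xs = k /\ forall Y : seq 'rV[R]_d, size Y = k -> cost P Xs <= cost P Y.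

Definition optimal_proj_kmeans (d d' k : nat) (Pi : 'M[R]_(d, d'))
    (S : seq 'rV[R]_d) (w : 'rV[R]_d -> R) (X' : seq 'rV[R]_d') : Prop :=
  size X' = k /\ forall Y' : seq 'rV[R]_d', size Y' = k ->
    proj_wcost Pi S w X' <= proj_wcost Pi S w Y'.

(* logarithm as used inside O-notation: max(1, ln x) *)
Definition lg (x : R) : R := Num.max 1 (ln x).

(* scalars sent by the data source: |S| d' entries of S', |S| weights, Delta *)
Definition comm_cost (s d' : nat) : R := (s * d' + s + 1)%:R.

(* operations at the data source: FSS (Tfss), drawing the d x d' JL matrix,
   and computing S' = S * Pi  (|S| x d times d x d', naive: 2 |S| d d') *)
Definition source_cost (Tfss : R) (d d' s : nat) : R :=
  Tfss + (d * d')%:R + (2 * s * d * d')%:R.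

End KMeans.

(* On the event where pi_2 yields an eps-coreset and pi_1 distorts both
   coreset costs by at most (1+eps)^2, optimality of X' = pi_1(X) gives
     (1-eps) cost(P,X) <= cost(S,X) <= (1+eps)^2 cost(pi_1 S, pi_1 X)
       <= (1+eps)^2 cost(pi_1 S, pi_1 Xstar) <= (1+eps)^4 cost(S,Xstar)
       <= (1+eps)^5 cost(P,Xstar),
   and that event has probability at least (1-delta) * (1-delta).  For the
   resource bounds put z = k/(eps delta): each of k, 1/eps, 1/delta and lg z
   lies in [1, z], so |S| d' = O~(k^3 eps^-6), and once min(n,d) >= z^13 the
   projection terms are absorbed by the n d min(n,d) cost of FSS. *)

From HB Require Import structures.
From mathcomp Require Import all_boot all_order all_algebra.
From mathcomp Require Import all_classical all_reals all_analysis.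
From mathcomp Require Import lra ring.
Import Order.TTheory GRing.Theory Num.Theory.
Local Open Scope classical_set_scope.
Local Open Scope ring_scope.

Section ApproximationGuarantee.
Variable R : realType.

Lemma approx_c_transfer {c x x' y y' : R} : 0 < c ->
  approx_c c x x' -> approx_c c y y' -> x' <= y' -> x <= c ^+ 2 * y.
Proof.
move=> c_gt0 [+ _] [_ yy'] le_x'y'; rewrite ler_pdivrMr // => xx'.
apply: (le_trans xx'); rewrite [x' * c]mulrC expr2 -mulrA ler_pM2l //.
exact: le_trans le_x'y' yy'.
Qed.

Lemma sqr_le_of_le_mul (a : R) (x y : \bar R) :
  0 <= a -> (a%:E <= x)%E -> (a%:E * x <= y)%E -> ((a ^+ 2)%:E <= y)%E.
Proof.
by move=> a0 ax axy; rewrite expr2 EFinM (le_trans _ axy) // lee_wpmul2l.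
Qed.

Variables (d d' k : nat) (Pi : 'M[R]_(d, d')) (S : seq 'rV[R]_d)
  (Delta : R) (w : 'rV[R]_d -> R).

Lemma proj_coreset_cost_le_opt {X Y : seq 'rV[R]_d} :
  optimal_proj_kmeans k Pi S w (map (jl_apply Pi) X) -> size Y = k ->
  proj_coreset_cost Pi S Delta w X <= proj_coreset_cost Pi S Delta w Y.
Proof. by move=> [_ opt] sY; rewrite lerD2r opt ?size_map. Qed.

Lemma coreset_jl_cost_le (eps : R) (P X Xstar : seq 'rV[R]_d) :
  0 < eps < 1 -> size Xstar = k -> is_coreset k eps P S Delta w ->
  optimal_proj_kmeans k Pi S w (map (jl_apply Pi) X) ->
  approx_c ((1 + eps) ^+ 2) (coreset_cost S Delta w X)
    (proj_coreset_cost Pi S Delta w X) ->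
  approx_c ((1 + eps) ^+ 2) (coreset_cost S Delta w Xstar)
    (proj_coreset_cost Pi S Delta w Xstar) ->
  cost P X <= (1 + eps) ^+ 5 / (1 - eps) * cost P Xstar.
Proof.
move=> /andP[eps_gt0 eps_lt1] sXs core optX jlX jlXs.
have sX : size X = k by case: optX; rewrite size_map.
have [coreX _] := core X sX; have [_ coreXs] := core Xstar sXs.
have c_gt0 : 0 < (1 + eps) ^+ 2 by rewrite exprn_gt0 ?addr_gt0.
have jl_chain : coreset_cost S Delta w X
                <= (1 + eps) ^+ 4 * coreset_cost S Delta w Xstar.
  rewrite (exprM _ 2 2).
  exact: approx_c_transfer c_gt0 jlX jlXs (proj_coreset_cost_le_opt optX sXs).
rewrite mulrAC ler_pdivlMr ?subr_gt0 // mulrC.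
apply: le_trans coreX (le_trans jl_chain _).
by rewrite [(1 + eps) ^+ 5]exprSr -[X in _ <= X]mulrA ler_pM2l ?exprn_gt0 ?addr_gt0.
Qed.

End ApproximationGuarantee.

Section Asymptotics.
Context {R : realType}.
Implicit Types c x y : R.

Lemma lg_ge1 x : 1 <= lg x.
Proof. by rewrite /lg le_max lexx. Qed.

Lemma lg_ge0 x : 0 <= lg x.
Proof. exact: le_trans ler01 (lg_ge1 x). Qed.

Lemma ln_le_lg x : ln x <= lg x.
Proof. by rewrite /lg le_max lexx orbT. Qed.

Lemma ler_lg {x y} : 0 < y -> x <= y -> lg x <= lg y.
Proof.
move=> y_gt0 le_xy; rewrite /lg ge_max le_max lexx /= le_max.
have [x_le0 | x_gt0] := leP x 0; last by rewrite ler_ln ?posrE // le_xy orbT.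
by rewrite (le_trans (ln_le0 (le_trans x_le0 ler01))).
Qed.

Lemma lg_le {x} : 1 <= x -> lg x <= x.
Proof.
move=> x_ge1; rewrite /lg ge_max x_ge1 ltW // ln_sublinear //.
exact: lt_le_trans ltr01 x_ge1.
Qed.

Lemma lg_MX {c x} n : 0 < c -> 0 < x -> lg (c * x ^+ n) <= (lg c + n%:R) * lg x.
Proof.
move=> c_gt0 x_gt0; have lg_c := lg_ge1 c; have lg_x := lg_ge1 x.
rewrite {1}/lg ge_max mulr_ege1 ?ler_wpDr //=.
rewrite lnM ?posrE ?exprn_gt0 // lnXn // mulrDl -[ln x *+ n]mulr_natl lerD //.
  by rewrite (le_trans (ln_le_lg c)) // ler_peMr ?lg_ge0.
by rewrite ler_wpM2l ?ln_le_lg.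
Qed.

Lemma ler_max1_pM (C x x' y : R) :
  0 <= x -> x <= x' -> y <= C * x -> y <= Num.max C 1 * x'.
Proof.
move=> x_ge0 le_xx' /le_trans; apply.
have le_C_max : C <= Num.max C 1 by rewrite le_max lexx.
have max_ge0 : 0 <= Num.max C 1 by rewrite le_max ler01 orbT.
exact: le_trans (ler_wpM2r x_ge0 le_C_max) (ler_wpM2l max_ge0 le_xx').
Qed.

Lemma mulr_ge1_leX {z x y : R} {i j : nat} :
  1 <= x <= z ^+ i -> 1 <= y <= z ^+ j -> 1 <= x * y <= z ^+ (i + j).
Proof.
move=> /andP[x_ge1 x_le] /andP[y_ge1 y_le].
by rewrite mulr_ege1 // exprD ler_pM // (le_trans ler01).
Qed.

Lemma exprn_ge1_leX {z x : R} {i : nat} (n : nat) :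
  1 <= x <= z ^+ i -> 1 <= x ^+ n <= z ^+ (i * n).
Proof.
move=> /andP[x_ge1 x_le]; have x_ge0 := le_trans ler01 x_ge1.
by rewrite exprn_ege1 //= exprM lerXn2r // nnegrE (le_trans x_ge0).
Qed.

(* 12 is the exponent in |S| k / delta <= max(C1, 1) z^12, z = k / (eps delta). *)
Definition dim_const (C1 C2 : R) : R :=
  Num.max C2 1 * (lg (Num.max C1 1) + 12%:R).

Definition comm_const (C1 C2 : R) : R :=
  Num.max C1 1 * dim_const C1 C2 + Num.max C1 1 + 1.

Definition source_const (C1 C2 C3 : R) : R :=
  3 * Num.max C3 1 + dim_const C1 C2 * (1 + 2 * Num.max C1 1).

End Asymptotics.

Section ResourceBounds.
Variables (R : realType) (k : nat) (eps delta : R).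
Hypotheses (k_gt0 : (0 < k)%N) (eps_gt0 : 0 < eps) (eps_lt1 : eps < 1)
  (delta_gt0 : 0 < delta) (delta_lt1 : delta < 1).

Let kr : R := k%:R.
Let z : R := kr / (eps * delta).

Let zE : z = kr * eps^-1 * delta^-1.
Proof. by rewrite /z invfM mulrA. Qed.

Let kr_ge1 : 1 <= kr. Proof. by rewrite ler1n. Qed.
Let inv_eps_ge1 : 1 <= eps^-1. Proof. by rewrite invf_ge1 ?ltW. Qed.
Let inv_delta_ge1 : 1 <= delta^-1. Proof. by rewrite invf_ge1 ?ltW. Qed.

Let kr_range : 1 <= kr <= z ^+ 1.
Proof. by rewrite kr_ge1 expr1 zE -mulrA ler_peMr ?mulr_ege1 ?(le_trans ler01). Qed.

Let inv_eps_range : 1 <= eps^-1 <= z ^+ 1.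
Proof.
by rewrite inv_eps_ge1 expr1 zE (mulrC kr) -mulrA ler_peMr ?mulr_ege1 ?(le_trans ler01).
Qed.

Let inv_delta_range : 1 <= delta^-1 <= z ^+ 1.
Proof. by rewrite inv_delta_ge1 expr1 zE ler_peMl ?mulr_ege1 ?(le_trans ler01). Qed.

Let z_ge1 : 1 <= z.
Proof. by case/andP: kr_range; rewrite expr1; apply: le_trans. Qed.

Let z_gt0 : 0 < z. Proof. exact: lt_le_trans ltr01 z_ge1. Qed.

Let lg_z_range : 1 <= lg z <= z ^+ 1.
Proof. by rewrite lg_ge1 expr1 lg_le. Qed.

Let lg_inv_delta_range : 1 <= lg delta^-1 <= z ^+ 1.
Proof.
rewrite lg_ge1 (le_trans _ (lg_le z_ge1)) // ler_lg //.
by case/andP: inv_delta_range => _; rewrite expr1.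
Qed.

Lemma fss_time_le {n d : nat} {C3 Tfss : R} :
  z ^+ 5 <= (minn n d)%:R ->
  Tfss <= C3 * ((minn (n * d ^ 2) (n ^ 2 * d))%:R
                + n%:R * kr * eps ^- 2 * (d%:R + kr * lg delta^-1)) ->
  Tfss <= Num.max C3 1 * (3 * (n * d * minn n d)%:R).
Proof.
set N : R := n%:R; set D : R := d%:R; set M : R := (minn n d)%:R => zM hT.
have M_ge1 : 1 <= M := le_trans (exprn_ege1 5 z_ge1) zM.
have M_le_D : M <= D by rewrite ler_nat geq_minr.
have lin_le : kr * eps^-1 ^+ 2 <= M.
  have /andP[_ h] := mulr_ge1_leX kr_range (exprn_ge1_leX 2 inv_eps_range).
  exact: le_trans h (le_trans (ler_weXn2l z_ge1 _) zM).
have quad_le : kr * eps^-1 ^+ 2 * (kr * lg delta^-1) <= M.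
  have /andP[_ h] := mulr_ge1_leX
    (mulr_ge1_leX kr_range (exprn_ge1_leX 2 inv_eps_range))
    (mulr_ge1_leX kr_range lg_inv_delta_range).
  exact: le_trans h zM.
have minE : (minn (n * d ^ 2) (n ^ 2 * d))%:R = N * D * M.
  by rewrite -!natrM minnMr minnC; congr (minn _ _)%:R; ring.
rewrite !natrM -/N -/D -/M; apply: ler_max1_pM hT; rewrite minE -exprVn.
  by rewrite addr_ge0 ?mulr_ge0 ?addr_ge0 ?mulr_ge0 ?exprn_ge0 ?lg_ge0 ?invr_ge0
    ?ler0n ?(ltW eps_gt0).
have h1 : N * (kr * eps^-1 ^+ 2) * D <= N * D * M.
  by rewrite mulrAC ler_wpM2l ?mulr_ge0.
have h2 : N * (kr * eps^-1 ^+ 2 * (kr * lg delta^-1)) <= N * D * M.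
  rewrite -[N * D * M]mulrA; apply: ler_wpM2l => //.
  rewrite (le_trans quad_le) // ler_peMl ?(le_trans ler01 M_ge1) //.
  exact: le_trans M_ge1 M_le_D.
have -> : N * kr * eps^-1 ^+ 2 * (D + kr * lg delta^-1)
        = N * (kr * eps^-1 ^+ 2) * D + N * (kr * eps^-1 ^+ 2 * (kr * lg delta^-1)).
  by ring.
lra.
Qed.

Variables (C1 C2 : R) (s d' : nat).
Hypothesis size_S : s%:R <= C1 * kr ^+ 3 * lg kr ^+ 2 * eps ^- 4 * lg delta^-1.
Hypothesis dim_S' : d'%:R <= C2 * eps ^- 2 * lg (s%:R * kr / delta).

Let size_mono : R := kr ^+ 3 * eps^-1 ^+ 4 * lg z ^+ 3.
Let dim_mono : R := eps^-1 ^+ 2 * lg z.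

Let size_mono_range : 1 <= size_mono <= z ^+ 10.
Proof.
exact: mulr_ge1_leX (mulr_ge1_leX (exprn_ge1_leX 3 kr_range)
  (exprn_ge1_leX 4 inv_eps_range)) (exprn_ge1_leX 3 lg_z_range).
Qed.

Let dim_mono_range : 1 <= dim_mono <= z ^+ 3.
Proof. exact: mulr_ge1_leX (exprn_ge1_leX 2 inv_eps_range) lg_z_range. Qed.

Lemma size_le : s%:R <= Num.max C1 1 * size_mono.
Proof.
have lg_kr : lg kr <= lg z by rewrite ler_lg //; case/andP: kr_range; rewrite expr1.
have lg_inv_delta : lg delta^-1 <= lg z.
  by rewrite ler_lg //; case/andP: inv_delta_range; rewrite expr1.
apply: (ler_max1_pM C1 (kr ^+ 3 * eps^-1 ^+ 4 * (lg kr ^+ 2 * lg delta^-1))).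
- by rewrite !mulr_ge0 ?exprn_ge0 ?lg_ge0 ?invr_ge0 ?ler0n ?(ltW eps_gt0).
- rewrite /size_mono [lg z ^+ 3]exprSr ler_wpM2l //.
    by rewrite mulr_ge0 ?exprn_ge0 ?invr_ge0 ?ler0n ?(ltW eps_gt0).
  by rewrite ler_pM ?exprn_ge0 ?lg_ge0 // lerXn2r ?nnegrE ?lg_ge0.
- by move: size_S; rewrite -exprVn; congr (_ <= _); ring.
Qed.

Lemma dim_le : d'%:R <= dim_const C1 C2 * dim_mono.
Proof.
have c1_gt0 : 0 < Num.max C1 1 by rewrite lt_max ltr01 orbT.
have /andP[_ size_z] := size_mono_range.
have s_le : s%:R <= Num.max C1 1 * z ^+ 10.
  exact: le_trans size_le (ler_wpM2l (ltW c1_gt0) size_z).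
have arg_le : s%:R * kr / delta <= Num.max C1 1 * z ^+ 12.
  have /andP[_ kz] := kr_range; have /andP[_ dz] := inv_delta_range.
  have -> : Num.max C1 1 * z ^+ 12 = Num.max C1 1 * z ^+ 10 * z ^+ 1 * z ^+ 1.
    by ring.
  by rewrite !ler_pM ?mulr_ge0 ?invr_ge0 ?ler0n ?(ltW delta_gt0).
have lg_arg : lg (s%:R * kr / delta) <= (lg (Num.max C1 1) + 12%:R) * lg z.
  apply: le_trans (lg_MX 12 c1_gt0 z_gt0).
  exact: ler_lg (mulr_gt0 c1_gt0 (exprn_gt0 12 z_gt0)) arg_le.
rewrite /dim_const -mulrA.
apply: (ler_max1_pM C2 (eps^-1 ^+ 2 * lg (s%:R * kr / delta))).
- by rewrite mulr_ge0 ?exprn_ge0 ?lg_ge0 ?invr_ge0 ?(ltW eps_gt0).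
- by rewrite /dim_mono mulrCA ler_wpM2l ?exprn_ge0 ?invr_ge0 ?(ltW eps_gt0).
- by rewrite mulrA exprVn.
Qed.

Let c1_ge0 : 0 <= Num.max C1 1.
Proof. by rewrite le_max ler01 orbT. Qed.

Let dim_const_ge0 : 0 <= dim_const C1 C2.
Proof.
rewrite mulr_ge0 ?addr_ge0 ?lg_ge0 ?ler0n //.
by rewrite le_max ler01 orbT.
Qed.

Let size_dim_le :
  s%:R * d'%:R <= Num.max C1 1 * dim_const C1 C2 * (size_mono * dim_mono).
Proof. by rewrite mulrACA ler_pM ?ler0n ?size_le ?dim_le. Qed.

Lemma comm_cost_le :
  comm_cost R s d' <= comm_const C1 C2 * kr ^+ 3 / eps ^+ 6 * lg z ^+ 4.
Proof.
have /andP[size_ge1 _] := size_mono_range.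
have /andP[dim_ge1 _] := dim_mono_range.
have mono_ge1 : 1 <= size_mono * dim_mono by rewrite mulr_ege1.
have s_le : s%:R <= Num.max C1 1 * (size_mono * dim_mono).
  apply: le_trans size_le (ler_wpM2l c1_ge0 _).
  by rewrite ler_peMr ?(le_trans ler01 size_ge1).
have -> : comm_const C1 C2 * kr ^+ 3 / eps ^+ 6 * lg z ^+ 4
        = comm_const C1 C2 * (size_mono * dim_mono).
  by rewrite /size_mono /dim_mono -exprVn; ring.
have := size_dim_le; rewrite /comm_cost /comm_const !natrD natrM.
lra.
Qed.

Lemma proj_time_le {n d : nat} : z ^+ 13 <= (minn n d)%:R ->
  (d * d')%:R + (2 * s * d * d')%:R
    <= dim_const C1 C2 * (1 + 2 * Num.max C1 1) * (n * d * minn n d)%:R.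
Proof.
set N : R := n%:R; set D : R := d%:R; set M : R := (minn n d)%:R => zM.
have M_ge1 : 1 <= M := le_trans (exprn_ege1 13 z_ge1) zM.
have N_ge1 : 1 <= N by rewrite (le_trans M_ge1) // ler_nat geq_minl.
have scale x c : 0 <= c -> x <= c * M -> D * x <= c * (N * D * M).
  move=> c_ge0 x_le; rewrite (le_trans (ler_wpM2l (ler0n _ d) x_le)) //.
  by rewrite [X in _ <= X](_ : _ = N * (D * (c * M))) ?ler_peMl ?mulr_ge0; last ring.
have /andP[_ mono_le] := mulr_ge1_leX size_mono_range dim_mono_range.
have /andP[_ dim_le3] := dim_mono_range.
have d'_le : d'%:R <= dim_const C1 C2 * M.
  rewrite (le_trans dim_le) // ler_wpM2l //.
  by rewrite (le_trans dim_le3) // (le_trans _ zM) // ler_weXn2l.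
have sd'_le : s%:R * d'%:R <= Num.max C1 1 * dim_const C1 C2 * M.
  rewrite (le_trans size_dim_le) // ler_wpM2l ?(mulr_ge0 c1_ge0 dim_const_ge0) //.
  exact: le_trans mono_le zM.
have := scale _ _ dim_const_ge0 d'_le.
have := scale _ _ (mulr_ge0 c1_ge0 dim_const_ge0) sd'_le.
rewrite !natrM -/N -/D -/M.
lra.
Qed.

Lemma source_cost_le (n d : nat) (C3 Tfss : R) :
  z ^+ 13 <= (minn n d)%:R ->
  Tfss <= C3 * ((minn (n * d ^ 2) (n ^ 2 * d))%:R
                + n%:R * kr * eps ^- 2 * (d%:R + kr * lg delta^-1)) ->
  source_cost Tfss d d' s <= source_const C1 C2 C3 * (n * d * minn n d)%:R.
Proof.
move=> zM hT; have z5M := le_trans (ler_weXn2l z_ge1 (isT : (5 <= 13)%N)) zM.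
have := fss_time_le z5M hT; have := proj_time_le zM.
rewrite /source_cost /source_const.
lra.
Qed.

End ResourceBounds.

Theorem theorem5 (R : realType) :
  (* (1) approximation guarantee *)
  (forall (d d' k : nat) (eps delta : R) (P Xstar : seq 'rV[R]_d)
     (dT : measure_display) (Omega : measurableType dT)
     (Pr : probability Omega R)
     (S : Omega -> seq 'rV[R]_d) (Delta : Omega -> R)
     (w : Omega -> 'rV[R]_d -> R) (Pi : Omega -> 'M[R]_(d, d'))
     (X' : Omega -> seq 'rV[R]_d') (X : Omega -> seq 'rV[R]_d),
   0 < eps < 1 -> 0 < delta < 1 -> (0 < k)%N -> uniq P ->
   optimal_kmeans k P Xstar ->
   (forall om, optimal_proj_kmeans k (Pi om) (S om) (w om) (X' om)) ->
   (forall om, map (jl_apply (Pi om)) (X om) = X' om) ->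
   measurable [set om | is_coreset k eps P (S om) (Delta om) (w om)] ->
   measurable [set om |
     approx_c ((1 + eps) ^+ 2) (coreset_cost (S om) (Delta om) (w om) (X om))
       (proj_coreset_cost (Pi om) (S om) (Delta om) (w om) (X om)) /\
     approx_c ((1 + eps) ^+ 2) (coreset_cost (S om) (Delta om) (w om) Xstar)
       (proj_coreset_cost (Pi om) (S om) (Delta om) (w om) Xstar)] ->
   ((1 - delta)%:E <= Pr [set om | is_coreset k eps P (S om) (Delta om) (w om)])%E ->
   ((1 - delta)%:E * Pr [set om | is_coreset k eps P (S om) (Delta om) (w om)]
      <= Pr ([set om | is_coreset k eps P (S om) (Delta om) (w om)] `&`
             [set om |
     approx_c ((1 + eps) ^+ 2) (coreset_cost (S om) (Delta om) (w om) (X om))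
       (proj_coreset_cost (Pi om) (S om) (Delta om) (w om) (X om)) /\
     approx_c ((1 + eps) ^+ 2) (coreset_cost (S om) (Delta om) (w om) Xstar)
       (proj_coreset_cost (Pi om) (S om) (Delta om) (w om) Xstar)]))%E ->
   exists A : set Omega, measurable A /\
     A `<=` [set om | cost P (X om) <= (1 + eps) ^+ 5 / (1 - eps) * cost P Xstar] /\
     (((1 - delta) ^+ 2)%:E <= Pr A)%E)
  /\
  (* (2) communication cost is O~(k^3 / eps^6) *)
  (forall C1 C2 : R, exists C : R, exists c : nat,
   forall (k s d' : nat) (eps delta : R),
   0 < eps < 1 -> 0 < delta < 1 -> (0 < k)%N ->
   s%:R <= C1 * k%:R ^+ 3 * lg k%:R ^+ 2 * eps ^- 4 * lg delta^-1 ->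
   d'%:R <= C2 * eps ^- 2 * lg (s%:R * k%:R / delta) ->
   comm_cost R s d' <= C * k%:R ^+ 3 / eps ^+ 6 * lg (k%:R / (eps * delta)) ^+ c)
  /\
  (* (3) data-source complexity is O(n d min(n,d)) when min(n,d) >> k, 1/eps, 1/delta *)
  (forall C1 C2 C3 : R, exists C : R, exists c : nat,
   forall (n d k s d' : nat) (eps delta Tfss : R),
   0 < eps < 1 -> 0 < delta < 1 -> (0 < k)%N ->
   (k%:R / (eps * delta)) ^+ c <= (minn n d)%:R ->
   s%:R <= C1 * k%:R ^+ 3 * lg k%:R ^+ 2 * eps ^- 4 * lg delta^-1 ->
   d'%:R <= C2 * eps ^- 2 * lg (s%:R * k%:R / delta) ->
   Tfss <= C3 * ((minn (n * d ^ 2) (n ^ 2 * d))%:R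
                 + n%:R * k%:R * eps ^- 2 * (d%:R + k%:R * lg delta^-1)) ->
   source_cost Tfss d d' s <= C * (n * d * minn n d)%:R).
Proof.
split.
  move=> d d' k eps delta P Xstar dT Omega Pr S Delta w Pi X' X eps01
    /andP[_ delta_lt1] _ _ [sXs _] optX' defX' mE mF PE PEF.
  eexists; split; first exact: measurableI mE mF.
  split; last by apply: sqr_le_of_le_mul PE PEF; rewrite subr_ge0 ltW.
  move=> om [core [jlX jlXs]].
  by apply: coreset_jl_cost_le eps01 sXs core _ jlX jlXs; rewrite defX'.
split=> [C1 C2 | C1 C2 C3].
  exists (comm_const C1 C2), 4%N.
  move=> k s d' eps delta /andP[eps_gt0 eps_lt1] /andP[delta_gt0 delta_lt1] k_gt0.
  exact: comm_cost_le.
exists (source_const C1 C2 C3), 13%N.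
move=> n d k s d' eps delta Tfss /andP[eps_gt0 eps_lt1] /andP[delta_gt0 delta_lt1].
move=> k_gt0 zM size_S dim_S' fss_time.
exact: source_cost_le zM fss_time.
Qed.
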